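(* Define real algebras $A_i$, $i\ge 0$, by $A_0=\mathbb{R}$ with $\bar a=a$, and $A_{i+1}=A_i\oplus A_i$ with multiplication $(a,b)(c,d)=(ac-d\bar b,\ \bar a d+cb)$ and involution $\overline{(a,b)}=(\bar a,-b)$. Then every $A_i$, $i\ge0$, is von-Neumann finite and reversible.
   Context: An algebra $A$ (unital, not necessarily associative) is von-Neumann finite if $ab=1$ implies $ba=1$ for all $a,b\in A$, and reversible if $ab=0$ implies $ba=0$ for all $a,b\in A$. *)

From mathcomp Require Import all_boot all_order all_algebra.
From mathcomp Require Import reals.
Set Implicit Arguments. Unset Strict Implicit. Unset Printing Implicit Defensive.
Import GRing.Theory Num.Theory.
Local Open Scope ring_scope.

Section CD.
Variable R : realType.

Fixpoint CD (n : nat) : Type :=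
  match n with 0 => (R : Type) | m.+1 => (CD m * CD m)%type end.

Fixpoint cd_zero (n : nat) : CD n :=
  match n return CD n with 0 => (0 : R) | m.+1 => (cd_zero m, cd_zero m) end.

Fixpoint cd_one (n : nat) : CD n :=
  match n return CD n with 0 => (1 : R) | m.+1 => (cd_one m, cd_zero m) end.

Fixpoint cd_add (n : nat) : CD n -> CD n -> CD n :=
  match n return CD n -> CD n -> CD n with
  | 0 => fun x y : R => x + y
  | m.+1 => fun x y => (cd_add x.1 y.1, cd_add x.2 y.2)
  end.

Fixpoint cd_opp (n : nat) : CD n -> CD n :=
  match n return CD n -> CD n with
  | 0 => fun x : R => - x
  | m.+1 => fun x => (cd_opp x.1, cd_opp x.2)
  end.

Fixpoint cd_conj (n : nat) : CD n -> CD n :=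
  match n return CD n -> CD n with
  | 0 => fun x : R => x
  | m.+1 => fun x => (cd_conj x.1, cd_opp x.2)
  end.

Fixpoint cd_mul (n : nat) : CD n -> CD n -> CD n :=
  match n return CD n -> CD n -> CD n with
  | 0 => fun x y : R => x * y
  | m.+1 => fun x y =>
      let: (a, b) := x in let: (c, d) := y in
      (cd_add (cd_mul a c) (cd_opp (cd_mul d (cd_conj b))),
       cd_add (cd_mul (cd_conj a) d) (cd_mul c b))
  end.

End CD.

Definition cd_vN_finite (R : realType) (n : nat) : Prop :=
  forall a b : CD R n, cd_mul a b = cd_one R n -> cd_mul b a = cd_one R n.

Definition cd_reversible (R : realType) (n : nat) : Prop :=
  forall a b : CD R n, cd_mul a b = cd_zero R n -> cd_mul b a = cd_zero R n.

(** The Euclidean inner product [<x, y>] on the coordinates of [A_n] satisfies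
    the adjunction rules [<xy, z> = <x, z ȳ> = <y, x̄ z>], and [x x̄ = x̄ x = |x|²].
    Writing [ba] as the conjugate of [āb̄ = (2 Re a - a)(2 Re b - b)] and
    expanding with these rules gives [|ba| = |ab|] and [Re (ba) = Re (ab)].
    Hence [ab = 0] forces [ba = 0]; and [ab = 1] gives [|ba|² = 1 = (Re ba)²],
    so [ba] has no imaginary part and equals [1]. *)

From mathcomp Require Import all_boot all_order all_algebra.
From mathcomp Require Import reals ring lra.

Set Implicit Arguments. Unset Strict Implicit. Unset Printing Implicit Defensive.
Import GRing.Theory Num.Theory.
Local Open Scope ring_scope.

Section CayleyDickson.
Variable R : realType.

Fixpoint cd_dot (n : nat) : CD R n -> CD R n -> R :=
  match n return CD R n -> CD R n -> R with
  | 0 => fun x y : R => x * y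
  | m.+1 => fun x y => cd_dot x.1 y.1 + cd_dot x.2 y.2
  end.

Fixpoint cd_re (n : nat) : CD R n -> R :=
  match n return CD R n -> R with
  | 0 => fun x : R => x
  | m.+1 => fun x => cd_re x.1
  end.

Fixpoint cd_real (n : nat) (r : R) : CD R n :=
  match n return CD R n with
  | 0 => r
  | m.+1 => (cd_real m r, cd_zero R m)
  end.

Fixpoint cd_scale (n : nat) (r : R) : CD R n -> CD R n :=
  match n return CD R n -> CD R n with
  | 0 => fun x : R => r * x
  | m.+1 => fun x => (cd_scale r x.1, cd_scale r x.2)
  end.

Lemma cd_one_real n : cd_one R n = cd_real n 1.
Proof. by elim: n => [|n IH] //=; rewrite IH. Qed.

Lemma cd_re_real n r : cd_re (cd_real n r) = r.
Proof. by elim: n. Qed.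

Lemma cd_addC n (x y : CD R n) : cd_add x y = cd_add y x.
Proof. by elim: n x y => [|n IH] x y /=; [rewrite addrC | rewrite IH (IH x.2)]. Qed.

Lemma cd_addACA n (a b c d : CD R n) :
  cd_add (cd_add a b) (cd_add c d) = cd_add (cd_add a c) (cd_add b d).
Proof. by elim: n a b c d => [|n IH] a b c d /=; [rewrite addrACA | rewrite (IH a.1) (IH a.2)]. Qed.

Lemma cd_add0r n (x : CD R n) : cd_add (cd_zero R n) x = x.
Proof. by elim: n x => [|n IH] x /=; [rewrite add0r | rewrite !IH; case: x]. Qed.

Lemma cd_addr0 n (x : CD R n) : cd_add x (cd_zero R n) = x.
Proof. by rewrite cd_addC cd_add0r. Qed.

Lemma cd_addrN n (x : CD R n) : cd_add x (cd_opp x) = cd_zero R n.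
Proof. by elim: n x => [|n IH] x /=; [rewrite subrr | rewrite !IH]. Qed.

Lemma cd_oppK n (x : CD R n) : cd_opp (cd_opp x) = x.
Proof. by elim: n x => [|n IH] x /=; [rewrite opprK | rewrite !IH; case: x]. Qed.

Lemma cd_oppD n (x y : CD R n) :
  cd_opp (cd_add x y) = cd_add (cd_opp x) (cd_opp y).
Proof. by elim: n x y => [|n IH] x y /=; [rewrite opprD | rewrite !IH]. Qed.

Lemma cd_opp0 n : cd_opp (cd_zero R n) = cd_zero R n.
Proof. by elim: n => [|n IH] /=; [rewrite oppr0 | rewrite IH]. Qed.

Lemma cd_realD n r s : cd_add (cd_real n r) (cd_real n s) = cd_real n (r + s).
Proof. by elim: n => [|n IH] //=; rewrite IH cd_add0r. Qed.

Lemma cd_scale1 n (x : CD R n) : cd_scale 1 x = x.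
Proof. by elim: n x => [|n IH] x /=; [rewrite mul1r | rewrite !IH; case: x]. Qed.

Lemma cd_conjN n (x : CD R n) : cd_conj (cd_opp x) = cd_opp (cd_conj x).
Proof. by elim: n x => [|n IH] x //=; rewrite IH. Qed.

Lemma cd_conjK n (x : CD R n) : cd_conj (cd_conj x) = x.
Proof. by elim: n x => [|n IH] x //=; rewrite IH cd_oppK; case: x. Qed.

Lemma cd_conjD n (x y : CD R n) :
  cd_conj (cd_add x y) = cd_add (cd_conj x) (cd_conj y).
Proof. by elim: n x y => [|n IH] x y //=; rewrite IH cd_oppD. Qed.

Lemma cd_conj0 n : cd_conj (cd_zero R n) = cd_zero R n.
Proof. by elim: n => [|n IH] //=; rewrite IH cd_opp0. Qed.

Lemma cd_conj_real n r : cd_conj (cd_real n r) = cd_real n r.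
Proof. by elim: n => [|n IH] //=; rewrite IH cd_opp0. Qed.

Lemma cd_conjE n (x : CD R n) :
  cd_conj x = cd_add (cd_real n (cd_re x *+ 2)) (cd_opp x).
Proof. by elim: n x => [|n IH] x /=; [rewrite mulr2n addrK | rewrite IH cd_add0r]. Qed.

Lemma cd_mul0 n (x : CD R n) :
  cd_mul (cd_zero R n) x = cd_zero R n /\ cd_mul x (cd_zero R n) = cd_zero R n.
Proof.
elim: n x => [|n IH] /= x; first by rewrite mul0r mulr0.
case: x => a b /=.
by rewrite cd_conj0 !(proj1 (IH _)) !(proj2 (IH _)) cd_opp0 !cd_add0r.
Qed.

Lemma cd_mul0r n (x : CD R n) : cd_mul (cd_zero R n) x = cd_zero R n.
Proof. exact: (cd_mul0 x).1. Qed.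

Lemma cd_mulr0 n (x : CD R n) : cd_mul x (cd_zero R n) = cd_zero R n.
Proof. exact: (cd_mul0 x).2. Qed.

Lemma cd_mulN n (x y : CD R n) :
  cd_mul (cd_opp x) y = cd_opp (cd_mul x y) /\
  cd_mul x (cd_opp y) = cd_opp (cd_mul x y).
Proof.
elim: n x y => [|n IH] /= x y; first by rewrite mulNr mulrN.
case: x => a b; case: y => c d /=.
by rewrite !cd_conjN !(proj1 (IH _ _)) !(proj2 (IH _ _)) !cd_oppD.
Qed.

Lemma cd_mulNr n (x y : CD R n) : cd_mul (cd_opp x) y = cd_opp (cd_mul x y).
Proof. exact: (cd_mulN x y).1. Qed.

Lemma cd_mulrN n (x y : CD R n) : cd_mul x (cd_opp y) = cd_opp (cd_mul x y).
Proof. exact: (cd_mulN x y).2. Qed.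

Lemma cd_mulD n (x y z : CD R n) :
  cd_mul (cd_add x y) z = cd_add (cd_mul x z) (cd_mul y z) /\
  cd_mul z (cd_add x y) = cd_add (cd_mul z x) (cd_mul z y).
Proof.
elim: n x y z => [|n IH] /= x y z; first by rewrite mulrDl mulrDr.
case: x => a b; case: y => c d; case: z => e f /=.
rewrite !cd_conjD !(proj1 (IH _ _ _)) !(proj2 (IH _ _ _)) !cd_oppD.
by split; congr (_, _); rewrite cd_addACA.
Qed.

Lemma cd_mulDl n (x y z : CD R n) :
  cd_mul (cd_add x y) z = cd_add (cd_mul x z) (cd_mul y z).
Proof. exact: (cd_mulD x y z).1. Qed.

Lemma cd_mulDr n (x y z : CD R n) :
  cd_mul z (cd_add x y) = cd_add (cd_mul z x) (cd_mul z y).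
Proof. exact: (cd_mulD x y z).2. Qed.

Lemma cd_mul_reall n r (x : CD R n) : cd_mul (cd_real n r) x = cd_scale r x.
Proof.
elim: n x => [|n IH] x //=; case: x => c d /=.
by rewrite cd_conj0 cd_conj_real !IH !cd_mulr0 cd_opp0 !cd_addr0.
Qed.

Lemma cd_mul_realr n r (x : CD R n) : cd_mul x (cd_real n r) = cd_scale r x.
Proof.
elim: n x => [|n IH] x /=; first by rewrite mulrC.
case: x => c d /=.
by rewrite cd_mul_reall IH cd_mul0r cd_mulr0 cd_opp0 cd_addr0 cd_add0r.
Qed.

Lemma cd_conjM n (x y : CD R n) :
  cd_conj (cd_mul x y) = cd_mul (cd_conj y) (cd_conj x).
Proof.
elim: n x y => [|n IH] x y /=; first by rewrite mulrC.
case: x => a b; case: y => c d /=.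
rewrite cd_conjD !cd_conjN !IH !cd_conjK cd_oppD.
by rewrite !cd_mulNr !cd_mulrN !cd_oppK (cd_addC (cd_opp _)).
Qed.

Lemma cd_dotC n (x y : CD R n) : cd_dot x y = cd_dot y x.
Proof. by elim: n x y => [|n IH] x y /=; [rewrite mulrC | rewrite IH (IH x.2)]. Qed.

Lemma cd_dotDl n (x y z : CD R n) :
  cd_dot (cd_add x y) z = cd_dot x z + cd_dot y z.
Proof. by elim: n x y z => [|n IH] x y z /=; [rewrite mulrDl | rewrite !IH addrACA]. Qed.

Lemma cd_dotNl n (x z : CD R n) : cd_dot (cd_opp x) z = - cd_dot x z.
Proof. by elim: n x z => [|n IH] x z /=; [rewrite mulNr | rewrite !IH opprD]. Qed.

Lemma cd_dotZl n r (x z : CD R n) : cd_dot (cd_scale r x) z = r * cd_dot x z.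
Proof. by elim: n x z => [|n IH] x z /=; [rewrite mulrA | rewrite !IH mulrDr]. Qed.

Lemma cd_dot0l n (z : CD R n) : cd_dot (cd_zero R n) z = 0.
Proof. by elim: n z => [|n IH] z /=; [rewrite mul0r | rewrite !IH addr0]. Qed.

Lemma cd_dot_reall n r (z : CD R n) : cd_dot (cd_real n r) z = r * cd_re z.
Proof. by elim: n z => [|n IH] z //=; rewrite IH cd_dot0l addr0. Qed.

Lemma cd_dotDr n (x y z : CD R n) :
  cd_dot z (cd_add x y) = cd_dot z x + cd_dot z y.
Proof. by rewrite cd_dotC cd_dotDl !(cd_dotC _ z). Qed.

Lemma cd_dotNr n (x z : CD R n) : cd_dot z (cd_opp x) = - cd_dot z x.
Proof. by rewrite cd_dotC cd_dotNl cd_dotC. Qed.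

Lemma cd_dotZr n r (x z : CD R n) : cd_dot z (cd_scale r x) = r * cd_dot z x.
Proof. by rewrite cd_dotC cd_dotZl cd_dotC. Qed.

Lemma cd_dot_realr n r (z : CD R n) : cd_dot z (cd_real n r) = r * cd_re z.
Proof. by rewrite cd_dotC cd_dot_reall. Qed.

Lemma cd_dot_conj n (x y : CD R n) : cd_dot (cd_conj x) (cd_conj y) = cd_dot x y.
Proof. by elim: n x y => [|n IH] x y //=; rewrite IH cd_dotNl cd_dotNr opprK. Qed.

Lemma cd_dot_ge0 n (x : CD R n) : 0 <= cd_dot x x.
Proof. by elim: n x => [|n IH] x /=; [rewrite -expr2 sqr_ge0 | rewrite addr_ge0]. Qed.

Lemma cd_dot_eq0 n (x : CD R n) : cd_dot x x = 0 -> x = cd_zero R n.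
Proof.
elim: n x => [|n IH] x /=; first by move/eqP; rewrite mulf_eq0 orbb => /eqP.
case: x => u v /= uv0.
have u0 : cd_dot u u = 0 by have := cd_dot_ge0 u; have := cd_dot_ge0 v; lra.
have v0 : cd_dot v v = 0 by have := cd_dot_ge0 u; have := cd_dot_ge0 v; lra.
by rewrite (IH _ u0) (IH _ v0).
Qed.

Lemma cd_re_sqr_le_dot n (x : CD R n) : cd_re x ^+ 2 <= cd_dot x x.
Proof.
elim: n x => [|n IH] x /=; first by rewrite expr2.
by have := cd_dot_ge0 x.2; have := IH x.1; lra.
Qed.

Lemma cd_dot_eq_re_sqr n (x : CD R n) :
  cd_dot x x = cd_re x ^+ 2 -> x = cd_real n (cd_re x).
Proof.
elim: n x => [|n IH] x //=; case: x => u v /= h.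
have hu := cd_re_sqr_le_dot u; have hv := cd_dot_ge0 v.
have eu : cd_dot u u = cd_re u ^+ 2 by lra.
have ev : cd_dot v v = 0 by lra.
by rewrite {1}(IH _ eu) (cd_dot_eq0 ev).
Qed.

Lemma cd_dot_mul_adj n (x y z : CD R n) :
  cd_dot (cd_mul x y) z = cd_dot x (cd_mul z (cd_conj y)) /\
  cd_dot (cd_mul x y) z = cd_dot y (cd_mul (cd_conj x) z).
Proof.
elim: n x y z => [|n IH] /= x y z; first by split; ring.
case: x => a b; case: y => c d; case: z => e f /=.
rewrite !cd_conjN !cd_conjK !cd_mulNr !cd_mulrN !cd_oppK.
rewrite !cd_dotDl !cd_dotDr !cd_dotNl !cd_dotNr.
split.
  rewrite (IH a c e).1 (IH d _ e).1 (IH _ d f).2 (IH c b f).2 !cd_conjK.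
  rewrite -(IH a f d).1 -(IH e b d).2 (cd_dotC d (cd_mul a f)) (cd_dotC d (cd_mul e b)).
  ring.
rewrite (IH a c e).2 (IH d _ e).1 (IH _ d f).2 (IH c b f).1 !cd_conjK.
ring.
Qed.

Lemma cd_dot_mulr_adj n (x y z : CD R n) :
  cd_dot (cd_mul x y) z = cd_dot x (cd_mul z (cd_conj y)).
Proof. exact: (cd_dot_mul_adj x y z).1. Qed.

Lemma cd_dot_mull_adj n (x y z : CD R n) :
  cd_dot (cd_mul x y) z = cd_dot y (cd_mul (cd_conj x) z).
Proof. exact: (cd_dot_mul_adj x y z).2. Qed.

Lemma cd_mul_conj n (y : CD R n) :
  cd_mul y (cd_conj y) = cd_real n (cd_dot y y) /\
  cd_mul (cd_conj y) y = cd_real n (cd_dot y y).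
Proof.
elim: n y => [|n IH] y //=; case: y => c d /=.
rewrite !cd_conjN !cd_conjK !cd_mulNr !cd_mulrN !cd_oppK.
rewrite (IH c).1 (IH c).2 !(IH d).1 !cd_realD.
by split; [rewrite cd_addC cd_addrN | rewrite cd_addrN].
Qed.

Lemma cd_dot_mul_l n (a b : CD R n) : cd_dot (cd_mul a b) a = cd_dot a a * cd_re b.
Proof. by rewrite cd_dot_mull_adj (cd_mul_conj a).2 cd_dot_realr mulrC. Qed.

Lemma cd_dot_mul_r n (a b : CD R n) : cd_dot (cd_mul a b) b = cd_dot b b * cd_re a.
Proof. by rewrite cd_dot_mulr_adj (cd_mul_conj b).1 cd_dot_realr mulrC. Qed.

Lemma cd_re_mul n (a b : CD R n) :
  cd_re (cd_mul a b) = cd_re a * cd_re b *+ 2 - cd_dot a b.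
Proof.
rewrite -[LHS]mul1r -cd_dot_realr cd_dot_mulr_adj cd_mul_reall cd_scale1.
by rewrite cd_conjE cd_dotDr cd_dotNr cd_dot_realr mulrnAl mulrC.
Qed.

Lemma cd_re_mulC n (a b : CD R n) : cd_re (cd_mul b a) = cd_re (cd_mul a b).
Proof. by rewrite !cd_re_mul (cd_dotC b a) mulrC. Qed.

Lemma cd_dot_mulC n (a b : CD R n) :
  cd_dot (cd_mul b a) (cd_mul b a) = cd_dot (cd_mul a b) (cd_mul a b).
Proof.
have -> : cd_mul b a = cd_conj (cd_mul (cd_conj a) (cd_conj b)).
  by rewrite cd_conjM !cd_conjK.
rewrite cd_dot_conj (cd_conjE a) (cd_conjE b) !cd_mulDl !cd_mulDr.
rewrite !cd_mul_reall !cd_mul_realr !cd_mulNr !cd_mulrN.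
rewrite !cd_dotDl !cd_dotDr !cd_dotZl !cd_dotZr !cd_dotNl !cd_dotNr.
rewrite !cd_dot_reall !cd_dot_realr !cd_re_real.
rewrite !cd_dot_mul_l !cd_dot_mul_r !(cd_dotC a (cd_mul a b)) !(cd_dotC b (cd_mul a b)).
rewrite !cd_dot_mul_l !cd_dot_mul_r cd_re_mul (cd_dotC b a) !mulr2n.
ring.
Qed.

End CayleyDickson.

Theorem corollary4p5 (R : realType) (n : nat) :
  cd_vN_finite R n /\ cd_reversible R n.
Proof.
split=> a b ab.
- have re_ba : cd_re (cd_mul b a) = 1 by rewrite cd_re_mulC ab cd_one_real cd_re_real.
  have norm_ba : cd_dot (cd_mul b a) (cd_mul b a) = cd_re (cd_mul b a) ^+ 2.
    by rewrite cd_dot_mulC ab re_ba cd_one_real cd_dot_reall cd_re_real mulr1 expr1n.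
  by rewrite (cd_dot_eq_re_sqr norm_ba) re_ba cd_one_real.
- by apply: cd_dot_eq0; rewrite cd_dot_mulC ab cd_dot0l.
Qed.
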